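(* If the quadrilateral $Q$ in $K^2$ has no parallel sides and no parallel diagonals, then a pair of bisectors of $Q$ is $Q$-antipodal if and only if it is $Q$-orthogonal.
   Context: $K$ is a field of characteristic $\neq 2$. Every line $L$ in $K^2$ has an equation $tX-uY+v=0$ normalized so that $t=1$ if $u=0$ and $u=1$ if $u\neq 0$; coefficients denoted $t_L,u_L,v_L$. A quadrilateral $Q=ABA'B'$ consists of four distinct lines $A,B,A',B'$ (sides), not all through one point, with adjacent sides ($A,B$; $B,A'$; $A',B'$; $B',A$) not parallel; opposite sides may be parallel. Vertices: $A\cap B$, $B\cap A'$, $A'\cap B'$, $B'\cap A$ (two may coincide if three sides are concurrent). Diagonals: the lines through nonadjacent vertices. The centroid is the average of the four vertices. Let $\alpha=t_Au_Bu_{A'}u_{B'}-u_At_Bu_{A'}u_{B'}+u_Au_Bt_{A'}u_{B'}-u_Au_Bu_{A'}t_{B'}$, $\beta=t_Au_Bt_{A'}u_{B'}-u_At_Bu_{A'}t_{B'}$, $\gamma=t_At_Bt_{A'}u_{B'}-t_At_Bu_{A'}t_{B'}+t_Au_Bt_{A'}t_{B'}-u_At_Bt_{A'}t_{B'}$, and $\langle \mathbf v,\mathbf w\rangle_Q=\mathbf v^T\begin{pmatrix}\gamma&-\beta\\-\beta&\alpha\end{pmatrix}\mathbf w$. Lines $\ell_1,\ell_2$ are $Q$-orthogonal if $\langle (u_{\ell_1},t_{\ell_1}),(u_{\ell_2},t_{\ell_2})\rangle_Q=0$. A line $\ell$ crosses a pair $\{\ell_1,\ell_2\}$ if distinct from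 both and not parallel to both; $\mathrm{mid}_{\{\ell_1,\ell_2\}}(\ell)$ is the midpoint of the points where $\ell$ meets $\ell_1,\ell_2$ (the point at infinity of $\ell$ if one is at infinity). $\ell$ bisects $Q$ (is a bisector) if $\mathrm{mid}_{\mathsf P}(\ell)$ is the same for all pairs $\mathsf P$ among $\{A,A'\},\{B,B'\}$ that $\ell$ crosses; this common point is the midpoint of the bisector. A pair $\{\ell_1,\ell_2\}$ of bisectors (possibly $\ell_1=\ell_2$) is $Q$-antipodal if the midpoint of their midpoints is the centroid of $Q$. *)

From HB Require Import structures.
From mathcomp Require Import all_boot all_order all_algebra.
Set Implicit Arguments. Unset Strict Implicit. Unset Printing Implicit Defensive.
Import Order.TTheory GRing.Theory Num.Theory.
Local Open Scope ring_scope.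

Section Geometry.
Variable K : fieldType.

(* A line  t X - u Y + v = 0, normalised: t = 1 if u = 0, and u = 1 if u <> 0. *)
Definition normalized (t u : K) : bool := if u == 0 then t == 1 else u == 1.

Record line := Line { lt : K; lu : K; lv : K; line_norm : normalized lt lu }.

Definition point := (K * K)%type.

Definition on_line (p : point) (l : line) : Prop :=
  lt l * p.1 - lu l * p.2 + lv l = 0.

Definition parallel (l1 l2 : line) : Prop := lt l1 * lu l2 - lu l1 * lt l2 = 0.

(* intersection point of two non-parallel lines (Cramer's rule) *)
Definition meet (l1 l2 : line) : point :=
  let D := lu l1 * lt l2 - lt l1 * lu l2 in
  ((lv l1 * lu l2 - lu l1 * lv l2) / D, (lt l2 * lv l1 - lt l1 * lv l2) / D).

Definition padd (p q : point) : point := (p.1 + q.1, p.2 + q.2).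
Definition pscale (c : K) (p : point) : point := (c * p.1, c * p.2).
Definition pmid (p q : point) : point := pscale (2%:R)^-1 (padd p q).

Definition line_through_coef (p q : point) : K * K * K :=
  let dx := q.1 - p.1 in let dy := q.2 - p.2 in
  if dx == 0 then (1, 0, - p.1)
  else let t := dy / dx in (t, 1, p.2 - t * p.1).

Lemma line_through_norm (p q : point) :
  normalized (line_through_coef p q).1.1 (line_through_coef p q).1.2.
Proof.
rewrite /line_through_coef; case: ifP => _ /=;
  by rewrite /normalized ?eqxx ?oner_eq0.
Qed.

Definition line_through (p q : point) : line :=
  @Line (line_through_coef p q).1.1 (line_through_coef p q).1.2
        (line_through_coef p q).2 (line_through_norm p q).

Definition quadrilateral (A B A' B' : line) : Prop :=
  [/\ A <> B, A <> A' & A <> B'] /\ [/\ B <> A', B <> B' & A' <> B'] /\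
  ~ (exists p : point, [/\ on_line p A, on_line p B, on_line p A' & on_line p B']) /\
  [/\ ~ parallel A B, ~ parallel B A', ~ parallel A' B' & ~ parallel B' A].

Definition vert1 (A B A' B' : line) := meet A B.
Definition vert2 (A B A' B' : line) := meet B A'.
Definition vert3 (A B A' B' : line) := meet A' B'.
Definition vert4 (A B A' B' : line) := meet B' A.

Definition diag1 (A B A' B' : line) :=
  line_through (vert1 A B A' B') (vert3 A B A' B').
Definition diag2 (A B A' B' : line) :=
  line_through (vert2 A B A' B') (vert4 A B A' B').

Definition centroid (A B A' B' : line) : point :=
  pscale (4%:R)^-1 (padd (padd (vert1 A B A' B') (vert2 A B A' B'))
                         (padd (vert3 A B A' B') (vert4 A B A' B'))).

Definition alpha (A B A' B' : line) : K :=
  lt A * lu B * lu A' * lu B' - lu A * lt B * lu A' * lu B'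
  + lu A * lu B * lt A' * lu B' - lu A * lu B * lu A' * lt B'.
Definition beta (A B A' B' : line) : K :=
  lt A * lu B * lt A' * lu B' - lu A * lt B * lu A' * lt B'.
Definition gamma (A B A' B' : line) : K :=
  lt A * lt B * lt A' * lu B' - lt A * lt B * lu A' * lt B'
  + lt A * lu B * lt A' * lt B' - lu A * lt B * lt A' * lt B'.

Definition Qform (A B A' B' : line) (v w : K * K) : K :=
  gamma A B A' B' * v.1 * w.1 - beta A B A' B' * v.1 * w.2
  - beta A B A' B' * v.2 * w.1 + alpha A B A' B' * v.2 * w.2.

Definition Q_orthogonal (A B A' B' : line) (l1 l2 : line) : Prop :=
  Qform A B A' B' (lu l1, lt l1) (lu l2, lt l2) = 0.

Definition crosses (l l1 l2 : line) : Prop :=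
  l <> l1 /\ l <> l2 /\ ~ (parallel l l1 /\ parallel l l2).

(* mid_{l1,l2}(l): None encodes the point at infinity of l *)
Definition mid (l l1 l2 : line) : option point :=
  if (lt l * lu l1 - lu l * lt l1 == 0) || (lt l * lu l2 - lu l * lt l2 == 0)
  then None else Some (pmid (meet l l1) (meet l l2)).

Definition bisects (A B A' B' : line) (l : line) : Prop :=
  crosses l A A' -> crosses l B B' -> mid l A A' = mid l B B'.

Definition bisector_midpoint (A B A' B' : line) (l : line) (m : point) : Prop :=
  (crosses l A A' /\ mid l A A' = Some m) \/ (crosses l B B' /\ mid l B B' = Some m).

Definition Q_antipodal (A B A' B' : line) (l1 l2 : line) : Prop :=
  exists m1 m2 : point,
    [/\ bisector_midpoint A B A' B' l1 m1, bisector_midpoint A B A' B' l2 m2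
      & pmid m1 m2 = centroid A B A' B'].

End Geometry.

(* A line through [m] with direction [d] is a bisector with midpoint [m]
   exactly when [midpoly A A' d m = 0] and [midpoly B B' d m = 0], two
   conditions linear in [d] and affine in [m].  Replacing [d] by its
   Q-orthogonal direction [Qperp d] and reflecting [m] in the centroid turns
   these two polynomials into linear combinations of themselves, so it maps
   bisectors to bisectors.
   If [l1] and [l2] are antipodal, then [l2] and the image of [l1] have the same
   midpoint; two bisectors with a common midpoint and independent directions
   would put that point on all four sides, so their directions are parallel,
   i.e. [l1] and [l2] are Q-orthogonal.  Conversely, when the diagonals are not
   parallel the direction of a bisector determines its midpoint, so the midpoint
   of a Q-orthogonal [l2] is the reflection of that of [l1]. *)

From mathcomp Require Import all_boot all_order all_algebra.
From mathcomp Require Import ring.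
From Stdlib Require Import Classical.
Import GRing.Theory.
Set Implicit Arguments. Unset Strict Implicit. Unset Printing Implicit Defensive.
Local Open Scope ring_scope.

Section Plane.
Variable K : fieldType.
Implicit Types (v w p q d e : K * K) (X Y l : line K) (m : point K).

Definition det2 v w : K := v.1 * w.2 - v.2 * w.1.
Definition dot v w : K := v.1 * w.1 + v.2 * w.2.

Lemma pair_subE v w : v - w = (v.1 - w.1, v.2 - w.2).
Proof. by []. Qed.

Lemma pair_neq0 v : (v != 0) = (v.1 != 0) || (v.2 != 0).
Proof. by case: v => a b; rewrite -[0]/(0, 0) xpair_eqE negb_and. Qed.

Lemma dotC v w : dot v w = dot w v.
Proof. by rewrite /dot mulrC [v.2 * _]mulrC. Qed.

Lemma det2C v w : det2 v w = - det2 w v.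
Proof. by rewrite /det2; ring. Qed.

Lemma det2vv v : det2 v v = 0.
Proof. by rewrite /det2 mulrC subrr. Qed.

Lemma pair_mul_eq0 v (x : K) : v != 0 -> v.1 * x = 0 -> v.2 * x = 0 -> x = 0.
Proof.
rewrite pair_neq0 => /orP[] hv h1 h2; [move: h1 | move: h2] => /eqP;
  by rewrite mulf_eq0 (negPf hv) => /eqP.
Qed.

Lemma dot_det2_eq0 p q (x y : K) : dot p (x, y) = 0 -> dot q (x, y) = 0 ->
  det2 p q != 0 -> x = 0 /\ y = 0.
Proof.
move=> hp hq hpq; split; apply: (mulfI hpq); rewrite mulr0.
- transitivity (q.2 * dot p (x, y) - p.2 * dot q (x, y)).
    by rewrite /det2 /dot /=; ring.
  by rewrite hp hq !mulr0 subr0.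
- transitivity (p.1 * dot q (x, y) - q.1 * dot p (x, y)).
    by rewrite /det2 /dot /=; ring.
  by rewrite hp hq !mulr0 subr0.
Qed.

Lemma det2_eq0_dot p q v : v != 0 -> dot p v = 0 -> dot q v = 0 -> det2 p q = 0.
Proof.
case: v => x y hv hp hq; apply/eqP; apply: contraNT hv => hpq.
by have [-> ->] := dot_det2_eq0 hp hq hpq; apply: eqxx.
Qed.

Lemma dot_eq0_det2 p q v : det2 p q = 0 -> q != 0 -> dot q v = 0 -> dot p v = 0.
Proof.
move=> hpq hq hqv; apply: (pair_mul_eq0 hq).
- have -> : q.1 * dot p v = p.1 * dot q v - v.2 * det2 p q by rewrite /det2 /dot; ring.
  by rewrite hqv hpq !mulr0 subr0.
- have -> : q.2 * dot p v = p.2 * dot q v + v.1 * det2 p q by rewrite /det2 /dot; ring.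
  by rewrite hqv hpq !mulr0 addr0.
Qed.

Lemma det2_trans p q v : q != 0 -> det2 p q = 0 -> det2 q v = 0 -> det2 p v = 0.
Proof.
move=> hq hpq hqv; apply: (pair_mul_eq0 hq).
- have -> : q.1 * det2 p v = p.1 * det2 q v + v.1 * det2 p q by rewrite /det2; ring.
  by rewrite hpq hqv !mulr0 addr0.
- have -> : q.2 * det2 p v = p.2 * det2 q v + v.2 * det2 p q by rewrite /det2; ring.
  by rewrite hpq hqv !mulr0 addr0.
Qed.

Definition dir l : K * K := (lu l, lt l).

Local Notation cross X Y := (det2 (dir X) (dir Y)).

Lemma dir_neq0 l : dir l != 0.
Proof.
case: l => t u v hn; rewrite pair_neq0 /=; move: hn; rewrite /normalized.
by case: eqP => [_ /eqP ->|]; rewrite ?oner_neq0 ?orbT.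
Qed.

Lemma parallelE X Y : parallel X Y <-> cross X Y = 0.
Proof.
rewrite /parallel (_ : _ - _ = - cross X Y); last by rewrite /det2 /=; ring.
by split => [/eqP|->]; rewrite ?oppr0 // oppr_eq0 => /eqP.
Qed.

Lemma cross_neq0 X Y : ~ parallel X Y -> cross X Y != 0.
Proof. by move=> h; apply/eqP => /parallelE. Qed.

Lemma parallel_refl l : parallel l l.
Proof. by apply/parallelE; rewrite /det2; ring. Qed.

Lemma parallel_sym X Y : parallel X Y -> parallel Y X.
Proof. by move=> /parallelE h; apply/parallelE; rewrite det2C h oppr0. Qed.

Lemma parallel_trans l X Y : parallel X l -> parallel l Y -> parallel X Y.
Proof.
by move=> /parallelE h1 /parallelE h2; apply/parallelE; apply: det2_trans (dir_neq0 l) h1 h2.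
Qed.

Lemma meet_on X Y : ~ parallel X Y -> on_line (meet X Y) X /\ on_line (meet X Y) Y.
Proof.
move=> /parallelE/eqP; rewrite /det2 /= => hXY.
by rewrite /on_line /meet /=; split; field.
Qed.

Lemma line_through_dir p q : det2 (q - p) (dir (line_through p q)) = 0.
Proof.
rewrite /line_through /line_through_coef /det2 /dir /=.
by case: eqP => [->|/eqP h] /=; [rewrite mul0r mulr0 subrr | field].
Qed.

Lemma line_through_parallel p1 p2 q1 q2 : p1 != q1 -> p2 != q2 ->
  det2 (q1 - p1) (q2 - p2) = 0 -> parallel (line_through p1 q1) (line_through p2 q2).
Proof.
rewrite [p1 == _]eq_sym [p2 == _]eq_sym -[q1 == p1]subr_eq0 -[q2 == p2]subr_eq0.
move=> h1 h2 h12; apply/parallelE.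
have h1' : det2 (dir (line_through p1 q1)) (q2 - p2) = 0.
  by apply: det2_trans h1 _ h12; rewrite det2C line_through_dir oppr0.
exact: det2_trans h2 h1' (line_through_dir p2 q2).
Qed.

Definition lval l m : K := lt l * m.1 - lu l * m.2 + lv l.

Lemma on_lineE m l : on_line m l = (lval l m = 0).
Proof. by []. Qed.

(* The line through [m] with direction [d] meets [X] at [m + s d] with
   [s = - lval X m / det2 d (dir X)], so [midpoly X Y d m] vanishes exactly
   when [m] is the midpoint of its intersections with [X] and [Y]. *)
Definition midpoly X Y d m : K :=
  lval X m * det2 d (dir Y) + lval Y m * det2 d (dir X).

Definition midform X Y m : K * K :=
  (lval X m * lt Y + lval Y m * lt X, - (lval X m * lu Y + lval Y m * lu X)).

Definition midgrad X Y d : K * K :=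
  (lt X * det2 d (dir Y) + lt Y * det2 d (dir X),
   - (lu X * det2 d (dir Y) + lu Y * det2 d (dir X))).

Lemma midpolyC X Y d m : midpoly X Y d m = midpoly Y X d m.
Proof. by rewrite /midpoly addrC. Qed.

Lemma midpoly_dirE X Y d m : midpoly X Y d m = dot d (midform X Y m).
Proof. by rewrite /midpoly /midform /dot /det2 /=; ring. Qed.

Lemma midpoly_subE X Y d m m' :
  midpoly X Y d m - midpoly X Y d m' = dot (midgrad X Y d) (m - m').
Proof. by rewrite pair_subE /midpoly /midgrad /lval /dot /=; ring. Qed.

Lemma midpoly_meet X Y d : ~ parallel X Y -> midpoly X Y d (meet X Y) = 0.
Proof. by case/meet_on; rewrite !on_lineE /midpoly => -> ->; rewrite !mul0r addr0. Qed.

Lemma midpoly_on_side X Y m : on_line m X -> midpoly X Y (dir X) m = 0.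
Proof. by rewrite on_lineE /midpoly det2vv => ->; rewrite mul0r mulr0 addr0. Qed.

Lemma midpoly_parallel_dir X Y d e m : det2 d e = 0 -> e != 0 ->
  midpoly X Y e m = 0 -> midpoly X Y d m = 0.
Proof. by rewrite !midpoly_dirE; apply: dot_eq0_det2. Qed.

Lemma midpoly_two_dirs X Y d d' m : ~ parallel X Y -> det2 d d' != 0 ->
  midpoly X Y d m = 0 -> midpoly X Y d' m = 0 -> on_line m X /\ on_line m Y.
Proof.
move=> /cross_neq0 hXY hdd' h h'; rewrite !on_lineE.
apply: (@dot_det2_eq0 (det2 d (dir Y), det2 d (dir X)) (det2 d' (dir Y), det2 d' (dir X))).
- by rewrite -h /midpoly /dot /=; ring.
- by rewrite -h' /midpoly /dot /=; ring.
rewrite (_ : det2 _ _ = - (det2 d d' * cross X Y)); last by rewrite /det2 /=; ring.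
by rewrite oppr_eq0 mulf_neq0.
Qed.

Lemma midgrad_neq0 X Y d : ~ parallel X Y -> d != 0 -> midgrad X Y d != 0.
Proof.
move=> hXY hd; rewrite pair_neq0 -negb_and; apply/negP.
rewrite /= oppr_eq0 => /andP[/eqP ht /eqP hu].
have [hY hX] : det2 d (dir Y) = 0 /\ det2 d (dir X) = 0.
  apply: (@dot_det2_eq0 (lt X, lt Y) (lu X, lu Y)) => //.
  rewrite (_ : det2 _ _ = - cross X Y); last by rewrite /det2 /=; ring.
  by rewrite oppr_eq0 cross_neq0.
by apply/hXY/parallelE; apply: det2_trans hd _ hY; rewrite det2C hX oppr0.
Qed.

Lemma midpoly_transfer X Y X' Y' d m p : ~ parallel X' Y' -> d != 0 ->
  det2 (midgrad X Y d) (midgrad X' Y' d) = 0 ->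
  midpoly X Y d m = 0 -> midpoly X' Y' d m = 0 ->
  midpoly X' Y' d p = 0 -> midpoly X Y d p = 0.
Proof.
move=> hXY' hd hgrad hm hm' hp.
rewrite -[LHS]subr0 -[X in _ - X]hm midpoly_subE.
apply: dot_eq0_det2 hgrad (midgrad_neq0 hXY' hd) _.
by rewrite -midpoly_subE hp hm' subrr.
Qed.

Lemma mid_eq_None l X Y : mid l X Y = None <-> parallel l X \/ parallel l Y.
Proof.
rewrite /mid /parallel.
case: eqP => hX; first by split => // _; left.
case: eqP => hY; first by split => // _; right.
by split => // -[].
Qed.

Lemma mid_nonparallel l X Y : ~ parallel l X -> ~ parallel l Y ->
  mid l X Y = Some (pmid (meet l X) (meet l Y)).
Proof. by rewrite /mid /parallel => /eqP/negPf -> /eqP/negPf ->. Qed.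

Hypothesis two_neq0 : (2%:R : K) != 0.

Lemma midpoly_mid l X Y m : mid l X Y = Some m ->
  midpoly X Y (dir l) m = 0 /\ on_line m l.
Proof.
rewrite /mid /parallel; case: eqP => //= /eqP hX; case: eqP => //= /eqP hY [<-].
rewrite -oppr_eq0 opprB in hX; rewrite -oppr_eq0 opprB in hY.
rewrite /midpoly /on_line /lval /det2 /dir /pmid /pscale /padd /meet /=.
by split; field; rewrite two_neq0 hX hY.
Qed.

Lemma crosses_nonparallel l X Y : ~ parallel l X -> ~ parallel l Y -> crosses l X Y.
Proof.
move=> hX hY; split; last split; last by case.
- by move=> e; apply: hX; rewrite e; apply: parallel_refl.
- by move=> e; apply: hY; rewrite e; apply: parallel_refl.
Qed.

Lemma not_crosses l X Y : ~ parallel X Y -> ~ crosses l X Y -> l = X \/ l = Y.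
Proof.
move=> hXY hc; case: (classic (l = X)) => [|hlX]; first by left.
case: (classic (l = Y)) => [|hlY]; first by right.
exfalso; apply: hc; split=> //; split=> // -[hX hY].
by apply: hXY; apply: parallel_trans hY; apply: parallel_sym.
Qed.

Lemma midpoly_of_mid l X X' Y Y' m :
  ~ parallel Y Y' -> (crosses l X X' -> crosses l Y Y' -> mid l X X' = mid l Y Y') ->
  crosses l X X' -> mid l X X' = Some m ->
  midpoly X X' (dir l) m = 0 /\ midpoly Y Y' (dir l) m = 0.
Proof.
move=> hYY' hbis hcX hm; have [hX hl] := midpoly_mid hm; split=> //.
case: (classic (crosses l Y Y')) => [hcY | /(not_crosses hYY') [] el].
- by have [] := midpoly_mid (etrans (esym (hbis hcX hcY)) hm).
- by subst l; apply: midpoly_on_side.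
- by subst l; rewrite midpolyC; apply: midpoly_on_side.
Qed.

Section Quadrilateral.
Variables A B A' B' : line K.
Hypothesis hQ : quadrilateral A B A' B'.
Hypotheses (hAA' : ~ parallel A A') (hBB' : ~ parallel B B').

Let adjacent_nonparallel :
  [/\ ~ parallel A B, ~ parallel B A', ~ parallel A' B' & ~ parallel B' A].
Proof. by case: hQ => _ [_ [_]]. Qed.

Let adjacent_cross_neq0 :
  [/\ cross A B != 0, cross B A' != 0, cross A' B' != 0 & cross B' A != 0].
Proof. by case: adjacent_nonparallel => *; split; apply: cross_neq0. Qed.

Let no_common_point p :
  on_line p A -> on_line p B -> on_line p A' -> on_line p B' -> False.
Proof. by case: hQ => _ [_ [hp _]] hA hB hA' hB'; apply: hp; exists p. Qed.

Lemma parallel_adjacent_sidesF l :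
  parallel l A \/ parallel l A' -> parallel l B \/ parallel l B' -> False.
Proof.
have [hAB hBA' hA'B' hB'A] := adjacent_nonparallel.
case=> /parallel_sym hA [] hB.
- exact/hAB/(parallel_trans hA hB).
- exact/hB'A/parallel_sym/(parallel_trans hA hB).
- exact/hBA'/parallel_sym/(parallel_trans hA hB).
- exact/hA'B'/(parallel_trans hA hB).
Qed.

Lemma bisector_midpoint_exists l :
  bisects A B A' B' l -> exists m, bisector_midpoint A B A' B' l m.
Proof.
move=> hbis; case: (classic (crosses l A A')) => [hcA | /(not_crosses hAA') hlA].
  case hm: (mid l A A') => [m|]; first by exists m; left.
  exfalso; apply: (parallel_adjacent_sidesF (l := l)); first exact/mid_eq_None.
  case: (classic (crosses l B B')) => [hcB | /(not_crosses hBB') [] ->].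
  - by apply/mid_eq_None; rewrite -(hbis hcA hcB).
  - by left; apply: parallel_refl.
  - by right; apply: parallel_refl.
have hl : parallel l A \/ parallel l A'.
  by case: hlA => ->; [left | right]; apply: parallel_refl.
have hlB : ~ parallel l B by move=> h; apply: parallel_adjacent_sidesF hl (or_introl h).
have hlB' : ~ parallel l B' by move=> h; apply: parallel_adjacent_sidesF hl (or_intror h).
exists (pmid (meet l B) (meet l B')); right.
by split; [apply: crosses_nonparallel | apply: mid_nonparallel].
Qed.

Definition bisecting d m := midpoly A A' d m = 0 /\ midpoly B B' d m = 0.

Lemma bisector_bisecting l m : bisects A B A' B' l ->
  bisector_midpoint A B A' B' l m -> bisecting (dir l) m.
Proof.
move=> hbis [[hc hm] | [hc hm]]; first exact: midpoly_of_mid hBB' hbis hc hm.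
by have [] := midpoly_of_mid hAA' (fun hB hA => esym (hbis hA hB)) hc hm.
Qed.

Local Notation C := (centroid A B A' B').

Definition antipode m : point K := (2%:R * C.1 - m.1, 2%:R * C.2 - m.2).

Lemma pmid_antipode m1 m2 : pmid m1 m2 = C <-> m2 = antipode m1.
Proof.
rewrite /antipode /pmid /pscale /padd; case: C => cx cy.
by case: m1 m2 => [x1 y1] [x2 y2] /=; split => [[<- <-] | [-> ->]]; congr (_, _); field.
Qed.

Local Notation alpha := (alpha A B A' B').
Local Notation beta := (beta A B A' B').
Local Notation gamma := (gamma A B A' B').

Definition Qperp d : K * K := (beta * d.1 - alpha * d.2, gamma * d.1 - beta * d.2).

Lemma Qform_det2 d1 d2 : Qform A B A' B' d1 d2 = det2 d2 (Qperp d1).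
Proof. by rewrite /Qform /Qperp /det2 /=; ring. Qed.

Lemma Qmatrix_det :
  alpha * gamma - beta ^+ 2 = - (cross A B * cross B A' * cross A' B' * cross B' A).
Proof. by rewrite /alpha /beta /gamma /det2 /=; ring. Qed.

Lemma Qperp_neq0 d : d != 0 -> Qperp d != 0.
Proof.
have [hAB hBA' hA'B' hB'A] := adjacent_cross_neq0.
case: d => x y hd; rewrite pair_neq0; apply: contraNT hd; rewrite negb_or !negbK.
case/andP=> /eqP h1 /eqP h2.
have [-> ->] : x = 0 /\ y = 0.
  apply: (@dot_det2_eq0 (beta, - alpha) (gamma, - beta)).
  - by rewrite -h1 /dot /Qperp /=; ring.
  - by rewrite -h2 /dot /Qperp /=; ring.
  rewrite (_ : det2 _ _ = alpha * gamma - beta ^+ 2); last by rewrite /det2 /=; ring.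
  by rewrite Qmatrix_det oppr_eq0 !mulf_neq0.
exact: eqxx.
Qed.

Let four_neq0 : (4%:R : K) != 0.
Proof. by rewrite (_ : 4 = 2 * 2)%N // natrM mulf_neq0. Qed.

Local Notation sigma := (cross A B * cross A' B' + cross B A' * cross B' A).

Lemma midpolyA_antipode d m : midpoly A A' (Qperp d) (antipode m) =
  - 2%:R^-1 * sigma * midpoly A A' d m - 2%:R^-1 * cross A A' ^+ 2 * midpoly B B' d m.
Proof.
have := adjacent_cross_neq0; rewrite /det2 /= => -[hAB hBA' hA'B' hB'A].
rewrite /midpoly /Qperp /antipode /centroid /lval /det2 /alpha /beta /gamma.
rewrite /vert1 /vert2 /vert3 /vert4 /meet /pscale /padd /=.
by field; rewrite two_neq0 four_neq0 hAB hBA' hA'B' hB'A.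
Qed.

Lemma midpolyB_antipode d m : midpoly B B' (Qperp d) (antipode m) =
  2%:R^-1 * cross B B' ^+ 2 * midpoly A A' d m + 2%:R^-1 * sigma * midpoly B B' d m.
Proof.
have := adjacent_cross_neq0; rewrite /det2 /= => -[hAB hBA' hA'B' hB'A].
rewrite /midpoly /Qperp /antipode /centroid /lval /det2 /alpha /beta /gamma.
rewrite /vert1 /vert2 /vert3 /vert4 /meet /pscale /padd /=.
by field; rewrite two_neq0 four_neq0 hAB hBA' hA'B' hB'A.
Qed.

Lemma bisecting_antipode d m : bisecting d m -> bisecting (Qperp d) (antipode m).
Proof.
case=> hA hB; rewrite /bisecting midpolyA_antipode midpolyB_antipode hA hB.
by rewrite !mulr0 subr0 addr0.
Qed.

Lemma bisecting_parallel_dir d e m : det2 d e = 0 -> e != 0 ->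
  bisecting e m -> bisecting d m.
Proof. by move=> hde he [hA hB]; split; apply: midpoly_parallel_dir hde he _. Qed.

Lemma bisecting_dirs_parallel d d' m : bisecting d m -> bisecting d' m -> det2 d d' = 0.
Proof.
move=> [hA hB] [hA' hB']; case: (eqVneq (det2 d d') 0) => // hdd'; exfalso.
have [onA onA'] := midpoly_two_dirs hAA' hdd' hA hA'.
have [onB onB'] := midpoly_two_dirs hBB' hdd' hB hB'.
exact: no_common_point onA onB onA' onB'.
Qed.

Hypothesis hdiag : ~ parallel (diag1 A B A' B') (diag2 A B A' B').

Local Notation V1 := (vert1 A B A' B').
Local Notation V2 := (vert2 A B A' B').
Local Notation V3 := (vert3 A B A' B').
Local Notation V4 := (vert4 A B A' B').

Lemma diagonals_det2_neq0 : det2 (V3 - V1) (V4 - V2) != 0.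
Proof.
have [hAB hBA' hA'B' hB'A] := adjacent_nonparallel.
apply/eqP => h; apply/hdiag/line_through_parallel => //; apply/eqP => e.
- have [onA onB] := meet_on hAB; have [onA' onB'] := meet_on hA'B'.
  by apply: (no_common_point onA onB); rewrite [meet A B]e.
- have [onB onA'] := meet_on hBA'; have [onB' onA] := meet_on hB'A.
  by apply: (no_common_point _ onB onA'); rewrite [meet B A']e.
Qed.

(* The directions through [meet B B'] along which it is the midpoint for
   [{A, A'}], and through [meet A A'] for [{B, B'}], are parallel exactly when
   the diagonals are. *)
Lemma midform_meet_det2 :
  det2 (midform A A' (meet B B')) (midform B B' (meet A A')) * cross A A' * cross B B' =
  - 2%:R * (cross A B * cross B A' * cross A' B' * cross B' A) * det2 (V3 - V1) (V4 - V2).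
Proof.
have := adjacent_cross_neq0; have := cross_neq0 hAA'; have := cross_neq0 hBB'.
rewrite pair_subE [V4 - V2]pair_subE /det2 /= => hB hA [hAB hBA' hA'B' hB'A].
rewrite /midform /lval /vert1 /vert2 /vert3 /vert4 /meet /=.
by field; rewrite hAB hBA' hA'B' hB'A hA hB.
Qed.

Lemma opposite_meets_midpolyF d : d != 0 ->
  midpoly A A' d (meet B B') = 0 -> midpoly B B' d (meet A A') = 0 -> False.
Proof.
have [hAB hBA' hA'B' hB'A] := adjacent_cross_neq0.
rewrite !midpoly_dirE dotC [dot d _]dotC => hd hR hP.
have := midform_meet_det2; rewrite (det2_eq0_dot hd hR hP) !mul0r => /esym/eqP.
by apply/negP; rewrite !mulf_neq0 ?oppr_eq0 ?diagonals_det2_neq0.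
Qed.

Lemma bisecting_midpoint_unique d m m' : d != 0 ->
  bisecting d m -> bisecting d m' -> m = m'.
Proof.
move=> hd [hA hB] [hA' hB']; case: (eqVneq m m') => // hmm'; exfalso.
have hgrad : det2 (midgrad A A' d) (midgrad B B' d) = 0.
  apply: (det2_eq0_dot (v := m - m')); first by rewrite subr_eq0.
  - by rewrite -midpoly_subE hA hA' subrr.
  - by rewrite -midpoly_subE hB hB' subrr.
apply: (opposite_meets_midpolyF hd).
- exact: midpoly_transfer hBB' hd hgrad hA hB (midpoly_meet _ hBB').
- apply: midpoly_transfer hAA' hd _ hB hA (midpoly_meet _ hAA').
  by rewrite det2C hgrad oppr0.
Qed.

End Quadrilateral.
End Plane.

Theorem corollary6p6 (K : fieldType) (char2 : (2%:R : K) != 0)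
  (A B A' B' : line K) :
  quadrilateral A B A' B' ->
  ~ parallel A A' -> ~ parallel B B' ->
  ~ parallel (diag1 A B A' B') (diag2 A B A' B') ->
  forall l1 l2 : line K,
    bisects A B A' B' l1 -> bisects A B A' B' l2 ->
    (Q_antipodal A B A' B' l1 l2 <-> Q_orthogonal A B A' B' l1 l2).
Proof.
move=> hQ hAA' hBB' hdiag l1 l2 hb1 hb2.
have bis1 := bisector_bisecting char2 hAA' hBB' hb1.
have bis2 := bisector_bisecting char2 hAA' hBB' hb2.
rewrite /Q_orthogonal -/(dir l1) -/(dir l2) Qform_det2; split.
  case=> m1 [m2 [hm1 hm2 /(pmid_antipode char2) em2]]; subst m2.
  exact (bisecting_dirs_parallel hQ hAA' hBB' (bis2 _ hm2)
           (bisecting_antipode char2 hQ (bis1 _ hm1))).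
move=> horth; have [m1 hm1] := bisector_midpoint_exists hQ hAA' hBB' hb1.
have [m2 hm2] := bisector_midpoint_exists hQ hAA' hBB' hb2.
exists m1, m2; split => //; apply/(pmid_antipode char2).
apply: (bisecting_midpoint_unique char2 hQ hAA' hBB' hdiag (dir_neq0 l2) (bis2 _ hm2)).
apply: bisecting_parallel_dir horth (Qperp_neq0 hQ (dir_neq0 l1)) _.
exact (bisecting_antipode char2 hQ (bis1 _ hm1)).
Qed.
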